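(* Let $\Lambda$ be a row-finite $k$-graph with no sources and let $\alpha$ be an action of $\mathbb{Z}^l$ on $\Lambda$ by automorphisms. Then $\Lambda$ is $\alpha$-cofinal if and only if $\Lambda\times_\alpha\mathbb{Z}^l$ is cofinal.
   Context: A $k$-graph is a countable category $\Lambda$ with a functor $d:\Lambda\to\mathbb{N}^k$ with unique factorisation; vertices are degree-$0$ morphisms; $v\Lambda w=\{\lambda:r(\lambda)=v,s(\lambda)=w\}$; row-finite: each $v\Lambda^n$ finite; no sources: each $v\Lambda^n$ nonempty. An automorphism is a bijective degree-preserving functor. $\Lambda\times_\alpha\mathbb{Z}^l$ is the $(k+l)$-graph with morphisms $\Lambda\times\mathbb{N}^l$, degree $(d(\lambda),m)$, $r(\lambda,m)=(r(\lambda),0)$, $s(\lambda,m)=(\alpha_{-m}(s(\lambda)),0)$, $(\mu,m)(\nu,n)=(\mu\alpha_m(\nu),m+n)$. For a $j$-graph $\Gamma$, $\Gamma^\infty$ is the set of degree-preserving functors $x:\Omega_j\to\Gamma$ ($\Omega_j=\{(a,b)\in\mathbb{N}^j\times\mathbb{N}^j:a\le b\}$, $r(a,b)=(a,a)$, $s(a,b)=(b,b)$, $d(a,b)=b-a$), and $x(n):=x(n,n)$. $\Gamma$ (row-finite, no sources) is cofinal if for every $x\in\Gamma^\infty$ and vertex $v$ there is $n$ with $v\Gamma x(n)\ne\emptyset$. $\Lambda$ is $\alpha$-cofinal if for every vertex $v$ and $x\in\Lambda^\infty$ there exist $p\in\mathbb{N}^k$ and $m,n\in\mathbb{N}^l$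 with $\alpha_{-m}(v)\Lambda\alpha_{-n}(x(p))\ne\emptyset$. *)

From Stdlib Require List.
From HB Require Import structures.
From mathcomp Require Import all_boot all_order all_algebra.
Set Implicit Arguments. Unset Strict Implicit. Unset Printing Implicit Defensive.
Import GRing.Theory Num.Theory.

Definition NN (k : nat) := {ffun 'I_k -> nat}.
Definition ZZ (l : nat) := {ffun 'I_l -> int}.

Definition nn0 k : NN k := [ffun _ => 0%N].
Definition nnadd k (a b : NN k) : NN k := [ffun i => (a i + b i)%N].
Definition nnsub k (a b : NN k) : NN k := [ffun i => (a i - b i)%N].
Definition nnle k (a b : NN k) : Prop := forall i, (a i <= b i)%N.

Definition zz0 l : ZZ l := [ffun _ => 0%R].
Definition zzadd l (a b : ZZ l) : ZZ l := [ffun i => (a i + b i)%R].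
Definition zzopp l (a : ZZ l) : ZZ l := [ffun i => (- a i)%R].
Definition nn2zz l (m : NN l) : ZZ l := [ffun i => Posz (m i)].

Definition nncat k l (a : NN k) (b : NN l) : NN (k + l) :=
  [ffun i => match split i with inl j => a j | inr j => b j end].

(* The data of a small category with a degree map to N^k:
   objects V, morphisms M, range r, source s, identities, composition
   (only meaningful on composable pairs s mu = r nu), degree. *)
Record kgraph_data (k : nat) := KGraphData {
  V : Type;
  M : Type;
  rg : M -> V;
  sr : M -> V;
  idm : V -> M;
  comp : M -> M -> M;
  deg : M -> NN k
}.
Arguments V {k}. Arguments M {k}. Arguments rg {k G} _ : rename.
Arguments sr {k G} _ : rename. Arguments idm {k G} _ : rename.
Arguments comp {k G} _ _ : rename. Arguments deg {k G} _ : rename.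

Definition is_kgraph k (G : kgraph_data k) : Prop :=
  (exists f : M G -> nat, injective f) /\
  (forall v : V G, rg (idm v) = v /\ sr (idm v) = v) /\
  (forall mu nu : M G, sr mu = rg nu ->
     rg (comp mu nu) = rg mu /\ sr (comp mu nu) = sr nu) /\
  (forall mu : M G, comp (idm (rg mu)) mu = mu /\ comp mu (idm (sr mu)) = mu) /\
  (forall mu nu la : M G, sr mu = rg nu -> sr nu = rg la ->
     comp (comp mu nu) la = comp mu (comp nu la)) /\
  (forall v : V G, deg (idm v) = nn0 k) /\
  (forall mu nu : M G, sr mu = rg nu ->
     deg (comp mu nu) = nnadd (deg mu) (deg nu)) /\
  (forall (la : M G) (m n : NN k), deg la = nnadd m n ->
     exists mu nu : M G,
       [/\ sr mu = rg nu, deg mu = m, deg nu = n & la = comp mu nu] /\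
       forall mu' nu' : M G,
         [/\ sr mu' = rg nu', deg mu' = m, deg nu' = n & la = comp mu' nu'] ->
         mu' = mu /\ nu' = nu).

Definition row_finite k (G : kgraph_data k) : Prop :=
  forall (v : V G) (n : NN k), exists s : seq (M G),
    forall la : M G, rg la = v -> deg la = n -> List.In la s.

Definition no_sources k (G : kgraph_data k) : Prop :=
  forall (v : V G) (n : NN k), exists la : M G, rg la = v /\ deg la = n.

(* Infinite paths: degree-preserving functors Omega_k -> G, where the
   morphisms of Omega_k are the pairs (a,b) with a <= b, r(a,b)=(a,a),
   s(a,b)=(b,b), d(a,b)=b-a, (a,b)(b,c)=(a,c).  Such a functor is given by
   x : N^k -> N^k -> M G, whose values at pairs with ~(a <= b) are irrelevant. *)
Definition is_infpath k (G : kgraph_data k) (x : NN k -> NN k -> M G) : Prop :=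
  (forall a : NN k, x a a = idm (rg (x a a))) /\
  (forall a b : NN k, nnle a b ->
     [/\ deg (x a b) = nnsub b a,
         rg (x a b) = rg (x a a) & sr (x a b) = rg (x b b)]) /\
  (forall a b c : NN k, nnle a b -> nnle b c ->
     x a c = comp (x a b) (x b c)).

Definition pt k (G : kgraph_data k) (x : NN k -> NN k -> M G) (n : NN k) : V G :=
  rg (x n n).

Definition cofinal k (G : kgraph_data k) : Prop :=
  forall x : NN k -> NN k -> M G, is_infpath x ->
  forall v : V G, exists (n : NN k) (la : M G), rg la = v /\ sr la = pt x n.

Definition is_action k l (G : kgraph_data k)
    (aV : ZZ l -> V G -> V G) (aM : ZZ l -> M G -> M G) : Prop :=
  (forall (m : ZZ l) (la : M G),
     rg (aM m la) = aV m (rg la) /\ sr (aM m la) = aV m (sr la)) /\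
  (forall (m : ZZ l) (v : V G), aM m (idm v) = idm (aV m v)) /\
  (forall (m : ZZ l) (mu nu : M G), sr mu = rg nu ->
     aM m (comp mu nu) = comp (aM m mu) (aM m nu)) /\
  (forall (m : ZZ l) (la : M G), deg (aM m la) = deg la) /\
  (forall m : ZZ l, bijective (aM m) /\ bijective (aV m)) /\
  (forall la : M G, aM (zz0 l) la = la) /\
  (forall v : V G, aV (zz0 l) v = v) /\
  (forall (m n : ZZ l) (la : M G), aM (zzadd m n) la = aM m (aM n la)) /\
  (forall (m n : ZZ l) (v : V G), aV (zzadd m n) v = aV m (aV n v)).

Definition alpha_cofinal k l (G : kgraph_data k)
    (aV : ZZ l -> V G -> V G) (aM : ZZ l -> M G -> M G) : Prop :=
  forall (v : V G) (x : NN k -> NN k -> M G), is_infpath x ->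
  exists (p : NN k) (m n : NN l) (la : M G),
    rg la = aV (zzopp (nn2zz m)) v /\
    sr la = aV (zzopp (nn2zz n)) (pt x p).

(* The (k+l)-graph Lambda x_alpha Z^l: morphisms Lambda x N^l,
   vertices (v,0) (identified with v), d(la,m) = (d la, m),
   r(la,m) = r la, s(la,m) = alpha_{-m}(s la),
   (mu,m)(nu,n) = (mu alpha_m(nu), m+n). *)
Definition crossed k l (G : kgraph_data k)
    (aV : ZZ l -> V G -> V G) (aM : ZZ l -> M G -> M G) : kgraph_data (k + l) :=
  @KGraphData (k + l) (V G) (M G * NN l)%type
    (fun p => rg p.1)
    (fun p => aV (zzopp (nn2zz p.2)) (sr p.1))
    (fun v => (idm v, nn0 l))
    (fun p q => (comp p.1 (aM (nn2zz p.2) q.1), nnadd p.2 q.2))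
    (fun p => nncat (deg p.1) p.2).

(* An infinite path y of Λ ×_α Z^l restricts along N^k × 0 to an infinite
   path x of Λ, and y(p, n) = α_{-n}(x(p)): the segment of y from (p, 0) to
   (p, n) has a degree-0, hence identity, Λ-component.  Conversely an infinite
   path x of Λ lifts to the path (p, n) ↦ α_{-n}(x(p)) of Λ ×_α Z^l.  A
   morphism (λ, m) of Λ ×_α Z^l from v to α_{-n}(x(p)) is the same as the
   morphism α_{-m}(λ) of Λ from α_{-m}(v) to α_{-n}(x(p)), so both notions of
   cofinality ask for the same connecting paths. *)
From Pilot Require Import Defs.
From mathcomp Require Import all_boot all_order all_algebra.
From mathcomp Require Import zify.
Set Implicit Arguments. Unset Strict Implicit. Unset Printing Implicit Defensive.
Import GRing.Theory Num.Theory.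

Section SplitDegree.
Variables k l : nat.

Definition nnfst (a : NN (k + l)) : NN k := [ffun i => a (lshift l i)].
Definition nnsnd (a : NN (k + l)) : NN l := [ffun i => a (rshift k i)].

Lemma nncat_lshift (a : NN k) (b : NN l) i : nncat a b (lshift l i) = a i.
Proof. by rewrite ffunE; have /= -> := unsplitK (inl i : 'I_k + 'I_l). Qed.

Lemma nncat_rshift (a : NN k) (b : NN l) i : nncat a b (rshift k i) = b i.
Proof. by rewrite ffunE; have /= -> := unsplitK (inr i : 'I_k + 'I_l). Qed.

Lemma nnfst_cat (a : NN k) (b : NN l) : nnfst (nncat a b) = a.
Proof. by apply/ffunP=> i; rewrite ffunE nncat_lshift. Qed.

Lemma nnsnd_cat (a : NN k) (b : NN l) : nnsnd (nncat a b) = b.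
Proof. by apply/ffunP=> i; rewrite ffunE nncat_rshift. Qed.

Lemma nncat_fst_snd (a : NN (k + l)) : nncat (nnfst a) (nnsnd a) = a.
Proof.
apply/ffunP=> i; rewrite -(splitK i); case: (split i) => j /=.
- by rewrite nncat_lshift ffunE.
- by rewrite nncat_rshift ffunE.
Qed.

Lemma nncat_inj (a c : NN k) (b d : NN l) : nncat a b = nncat c d -> a = c /\ b = d.
Proof.
move=> eq_cat; split.
- by have := congr1 nnfst eq_cat; rewrite !nnfst_cat.
- by have := congr1 nnsnd eq_cat; rewrite !nnsnd_cat.
Qed.

Lemma nnsub_cat (a b : NN k) (m n : NN l) :
  nnsub (nncat b n) (nncat a m) = nncat (nnsub b a) (nnsub n m).
Proof.
apply/ffunP=> i; rewrite -(splitK i) ffunE; case: (split i) => j /=.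
- by rewrite !nncat_lshift ffunE.
- by rewrite !nncat_rshift ffunE.
Qed.

Lemma nnle_cat (a b : NN k) (m n : NN l) :
  nnle a b -> nnle m n -> nnle (nncat a m) (nncat b n).
Proof.
move=> le_ab le_mn i; rewrite -(splitK i); case: (split i) => j /=.
- by rewrite !nncat_lshift.
- by rewrite !nncat_rshift.
Qed.

Lemma nnle_fst (a b : NN (k + l)) : nnle a b -> nnle (nnfst a) (nnfst b).
Proof. by move=> le_ab i; rewrite !ffunE. Qed.

Lemma nnle_snd (a b : NN (k + l)) : nnle a b -> nnle (nnsnd a) (nnsnd b).
Proof. by move=> le_ab i; rewrite !ffunE. Qed.

End SplitDegree.

Lemma nnle_refl k (a : NN k) : nnle a a.
Proof. by []. Qed.

Lemma nnle0n k (a : NN k) : nnle (nn0 k) a.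
Proof. by move=> i; rewrite ffunE. Qed.

Lemma nnsubnn k (a : NN k) : nnsub a a = nn0 k.
Proof. by apply/ffunP=> i; rewrite !ffunE subnn. Qed.

Lemma nnsubn0 k (a : NN k) : nnsub a (nn0 k) = a.
Proof. by apply/ffunP=> i; rewrite !ffunE subn0. Qed.

Lemma nnadd0n k (a : NN k) : nnadd (nn0 k) a = a.
Proof. by apply/ffunP=> i; rewrite !ffunE. Qed.

Lemma nnadd_sub k (m n p : NN k) :
  nnle m n -> nnle n p -> nnadd (nnsub n m) (nnsub p n) = nnsub p m.
Proof. by move=> le_mn le_np; apply/ffunP=> i; rewrite !ffunE; have := le_mn i; have := le_np i; lia. Qed.

Lemma nn2zz0 l : nn2zz (nn0 l) = zz0 l.
Proof. by apply/ffunP=> i; rewrite !ffunE. Qed.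

Lemma zzopp0 l : zzopp (zz0 l) = zz0 l.
Proof. by apply/ffunP=> i; rewrite !ffunE oppr0. Qed.

Lemma zzaddN l (m : ZZ l) : zzadd m (zzopp m) = zz0 l.
Proof. by apply/ffunP=> i; rewrite !ffunE addrN. Qed.

Lemma zzaddNm l (m : ZZ l) : zzadd (zzopp m) m = zz0 l.
Proof. by apply/ffunP=> i; rewrite !ffunE addNr. Qed.

Lemma zzadd_opp_sub l (m n : NN l) : nnle m n ->
  zzadd (zzopp (nn2zz (nnsub n m))) (zzopp (nn2zz m)) = zzopp (nn2zz n).
Proof. by move=> le_mn; apply/ffunP=> i; rewrite !ffunE -opprD -PoszD subnK. Qed.

Lemma zzadd_sub_opp l (m n : NN l) : nnle m n ->
  zzadd (nn2zz (nnsub n m)) (zzopp (nn2zz n)) = zzopp (nn2zz m).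
Proof.
move=> le_mn; apply/ffunP=> i; rewrite !ffunE.
by rewrite -{2}(subnK (le_mn i)) PoszD opprD addrA addrN add0r.
Qed.

Lemma kgraph_deg0_idm k (G : kgraph_data k) (mu : M G) :
  is_kgraph G -> deg mu = nn0 k -> mu = idm (rg mu).
Proof.
move=> [_ [id_rg_sr [_ [comp_idm [_ [deg_idm [_ factor]]]]]]] deg_mu.
have [id_sr_mu _] := id_rg_sr (sr mu); have [_ id_rg_mu] := id_rg_sr (rg mu).
have deg_mu00 : deg mu = nnadd (nn0 k) (nn0 k) by rewrite nnadd0n.
have [mu' [nu' [_ uniq_factor]]] := factor mu _ _ deg_mu00.
have [-> _] := uniq_factor (idm (rg mu)) mu
  (And4 id_rg_mu (deg_idm _) deg_mu (esym (proj1 (comp_idm mu)))).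
have [-> _] := uniq_factor mu (idm (sr mu))
  (And4 (esym id_sr_mu) deg_mu (deg_idm _) (esym (proj2 (comp_idm mu)))).
by [].
Qed.

Section Action.
Variables (k l : nat) (G : kgraph_data k).
Variables (aV : ZZ l -> V G -> V G) (aM : ZZ l -> M G -> M G).
Hypothesis act : is_action aV aM.

Lemma act_rg (m : ZZ l) (la : M G) : rg (aM m la) = aV m (rg la).
Proof. by case: act => /(_ m la) []. Qed.

Lemma act_sr (m : ZZ l) (la : M G) : sr (aM m la) = aV m (sr la).
Proof. by case: act => /(_ m la) []. Qed.

Lemma act_idm (m : ZZ l) (v : V G) : aM m (idm v) = idm (aV m v).
Proof. by case: act => _ []. Qed.

Lemma act_comp (m : ZZ l) (mu nu : M G) :
  sr mu = rg nu -> aM m (Defs.comp mu nu) = Defs.comp (aM m mu) (aM m nu).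
Proof. by case: act => _ [_ [comp_hom _]]; apply: comp_hom. Qed.

Lemma act_deg (m : ZZ l) (la : M G) : deg (aM m la) = deg la.
Proof. by case: act => _ [_ [_ []]]. Qed.

Lemma actM0 (la : M G) : aM (zz0 l) la = la.
Proof. by case: act => _ [_ [_ [_ [_ []]]]]. Qed.

Lemma actV0 (v : V G) : aV (zz0 l) v = v.
Proof. by case: act => _ [_ [_ [_ [_ [_ []]]]]]. Qed.

Lemma actMD (m n : ZZ l) (la : M G) : aM (zzadd m n) la = aM m (aM n la).
Proof. by case: act => _ [_ [_ [_ [_ [_ [_ []]]]]]]. Qed.

Lemma actVD (m n : ZZ l) (v : V G) : aV (zzadd m n) v = aV m (aV n v).
Proof. by case: act => _ [_ [_ [_ [_ [_ [_ []]]]]]]. Qed.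

Lemma actVK (m : ZZ l) (v : V G) : aV m (aV (zzopp m) v) = v.
Proof. by rewrite -actVD zzaddN actV0. Qed.

Lemma actVKV (m : ZZ l) (v : V G) : aV (zzopp m) (aV m v) = v.
Proof. by rewrite -actVD zzaddNm actV0. Qed.

Notation GZ := (crossed aV aM).

Definition restrict_path (y : NN (k + l) -> NN (k + l) -> M GZ) : NN k -> NN k -> M G :=
  fun a b => (y (nncat a (nn0 l)) (nncat b (nn0 l))).1.

Definition lift_path (x : NN k -> NN k -> M G) : NN (k + l) -> NN (k + l) -> M GZ :=
  fun a b => (aM (zzopp (nn2zz (nnsnd a))) (x (nnfst a) (nnfst b)),
              nnsub (nnsnd b) (nnsnd a)).

Section Restriction.
Variable y : NN (k + l) -> NN (k + l) -> M GZ.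
Hypothesis y_path : is_infpath y.

Lemma restrict_path_snd a b : nnle a b -> (y (nncat a (nn0 l)) (nncat b (nn0 l))).2 = nn0 l.
Proof.
move=> le_ab; case: y_path => _ [y_deg _].
have [deg_y _ _] := y_deg _ _ (nnle_cat le_ab (nnle_refl (nn0 l))).
by move: deg_y; rewrite nnsub_cat nnsubnn => /nncat_inj [].
Qed.

Lemma restrict_infpath : is_infpath (restrict_path y).
Proof.
case: y_path => y_idm [y_deg y_comp]; split; [|split].
- by move=> a; rewrite /restrict_path {1}y_idm.
- move=> a b le_ab.
  have [deg_y rg_y sr_y] := y_deg _ _ (nnle_cat le_ab (nnle_refl (nn0 l))).
  split=> //.
  + by move: deg_y; rewrite nnsub_cat => /nncat_inj [].
  + by move: sr_y => /=; rewrite restrict_path_snd // nn2zz0 zzopp0 actV0.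
- move=> a b c le_ab le_bc; rewrite /restrict_path.
  rewrite (y_comp _ _ _ (nnle_cat le_ab (nnle_refl _)) (nnle_cat le_bc (nnle_refl _))) /=.
  by rewrite restrict_path_snd // nn2zz0 actM0.
Qed.

Lemma pt_restrict_path (G_kgraph : is_kgraph G) p n :
  pt y (nncat p n) = aV (zzopp (nn2zz n)) (pt (restrict_path y) p).
Proof.
case: y_path => _ [y_deg _]; case: (G_kgraph) => _ [id_rg_sr _].
have [deg_y rg_y sr_y] := y_deg _ _ (nnle_cat (nnle_refl p) (nnle0n n)).
set mu := y _ _ in deg_y rg_y sr_y.
move: deg_y; rewrite nnsub_cat nnsubnn nnsubn0 => /nncat_inj [deg_mu1 mu2].
have [_ sr_idm] := id_rg_sr (rg mu.1).
rewrite /pt -sr_y /= mu2 (kgraph_deg0_idm G_kgraph deg_mu1) sr_idm.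
by congr aV; exact: rg_y.
Qed.

End Restriction.

Section Lift.
Variable x : NN k -> NN k -> M G.
Hypothesis x_path : is_infpath x.

Lemma lift_infpath : is_infpath (lift_path x).
Proof.
case: x_path => x_idm [x_deg x_comp]; split; [|split].
- by move=> a; rewrite /lift_path /= nnsubnn [in LHS]x_idm act_idm act_rg.
- move=> a b le_ab; have [deg_x rg_x sr_x] := x_deg _ _ (nnle_fst le_ab); split => /=.
  + by rewrite act_deg deg_x -nnsub_cat !nncat_fst_snd.
  + by rewrite !act_rg rg_x.
  + by rewrite act_sr -actVD (zzadd_opp_sub (nnle_snd le_ab)) act_rg sr_x.
- move=> a b c le_ab le_bc; rewrite /lift_path /=.
  have [_ _ sr_x] := x_deg _ _ (nnle_fst le_ab).
  have [_ rg_x _] := x_deg _ _ (nnle_fst le_bc).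
  rewrite -actMD (zzadd_sub_opp (nnle_snd le_ab)) -act_comp; last by rewrite sr_x rg_x.
  by rewrite -x_comp ?(nnadd_sub (nnle_snd le_ab) (nnle_snd le_bc)) //; exact: nnle_fst.
Qed.

Lemma pt_lift_path a : pt (lift_path x) a = aV (zzopp (nn2zz (nnsnd a))) (pt x (nnfst a)).
Proof. by rewrite /pt /lift_path /= act_rg. Qed.

End Lift.

Lemma cofinal_crossed_of_alpha_cofinal :
  is_kgraph G -> alpha_cofinal aV aM -> cofinal GZ.
Proof.
move=> G_kgraph alpha_cof y y_path v.
have [p [m [n [la [rg_la sr_la]]]]] := alpha_cof v _ (restrict_infpath y_path).
exists (nncat p n), (aM (nn2zz m) la, m); split => /=.
- by rewrite act_rg rg_la actVK.
- by rewrite act_sr actVKV sr_la -(pt_restrict_path y_path G_kgraph).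
Qed.

Lemma alpha_cofinal_of_cofinal_crossed : cofinal GZ -> alpha_cofinal aV aM.
Proof.
move=> cof v x x_path.
have [q [[la m] [rg_la sr_la]]] := cof _ (lift_infpath x_path) v.
exists (nnfst q), m, (nnsnd q), (aM (zzopp (nn2zz m)) la); split.
- by rewrite act_rg; move: rg_la => /= ->.
- by rewrite act_sr; move: sr_la; rewrite pt_lift_path /= => ->.
Qed.

End Action.

Theorem lemma4p6 (k l : nat) (G : kgraph_data k)
    (aV : ZZ l -> V G -> V G) (aM : ZZ l -> M G -> M G) :
  is_kgraph G -> row_finite G -> no_sources G -> is_action aV aM ->
  (alpha_cofinal aV aM <-> cofinal (crossed aV aM)).
Proof.
move=> G_kgraph _ _ act; split.
- exact: cofinal_crossed_of_alpha_cofinal.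
- exact: alpha_cofinal_of_cofinal_crossed.
Qed.
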